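(* Consider a single element $[x_0,x_p]$ with $p\ge1$, Gauss–Lobatto nodes and the matrices $\mathcal{P},\mathcal{Q}_x,\mathcal{D}_x,\mathcal{B}$ as in the context. Let $a\ge 0$ be a constant, let $\varepsilon_k(t)\ge 0$ ($k=0,\dots,p$) be continuous nodal diffusion coefficients with $\mathcal{E}(t)=\mathrm{diag}(\varepsilon_0(t),\dots,\varepsilon_p(t))$, and let $$\mathcal{Q}_{xx}(\varepsilon)=\mathcal{E}\mathcal{B}\mathcal{D}_x-(\sqrt{\mathcal{E}}\mathcal{D}_x)^T\mathcal{P}(\sqrt{\mathcal{E}}\mathcal{D}_x).$$ Let $\mathbf{U}(t)=(\bar u_0,\dots,\bar u_p)^T$ be a $C^1$ solution of the semi-discrete scheme $$\mathcal{P}\frac{d\mathbf{U}}{dt}+a\,\mathcal{Q}_x\mathbf{U}=\mathcal{Q}_{xx}(\varepsilon)\mathbf{U}+\sigma_0\,e_0\big[a\bar u_0-\varepsilon_0(\mathcal{D}_x\mathbf{U})_0-g_0\big]+\sigma_p\,e_p\big[-\varepsilon_p(\mathcal{D}_x\mathbf{U})_p-g_p\big],$$ where $e_0,e_p$ are the first and last standard unit vectors in $\mathbb{R}^{p+1}$. If $\sigma_0=-1$, $\sigma_p=1$ and the boundary data vanish ($g_0=g_p=0$), then for all $t\ge0$ $$\mathbf{U}(t)^T\mathcal{P}\mathbf{U}(t)+2\int_0^t\big(\sqrt{\mathcal{E}}\mathcal{D}_x\mathbf{U}\big)^T\mathcal{P}\big(\sqrt{\mathcal{E}}\mathcal{D}_x\mathbf{U}\big)\,ds\le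 \mathbf{U}(0)^T\mathcal{P}\mathbf{U}(0).$$
   Context: Gauss–Lobatto nodes $x_0<\dots<x_p$ (including both endpoints) with positive weights $w_0,\dots,w_p$; $\ell_j$ the degree-$p$ Lagrange basis polynomials on these nodes. $\mathcal{P}=\mathrm{diag}(w_0,\dots,w_p)$; $(\mathcal{Q}_x)_{ij}=\int_{x_0}^{x_p}\ell_i\ell_j'\,dx$; $\mathcal{D}_x=\mathcal{P}^{-1}\mathcal{Q}_x$, so $(\mathcal{D}_x\mathbf{U})_k$ is the derivative at $x_k$ of the interpolant $\sum_j\bar u_j\ell_j$; $\mathcal{B}=\mathrm{diag}(-1,0,\dots,0,1)$; $\sqrt{\mathcal{E}}=\mathrm{diag}(\sqrt{\varepsilon_0},\dots,\sqrt{\varepsilon_p})$. This is the discretization of $u_t+au_x=(\varepsilon u_x)_x$ with weakly imposed boundary conditions $au-\varepsilon u_x=g_0$ at the left end and $-\varepsilon u_x=g_p$ at the right end; $\sigma_0,\sigma_p$ are penalty parameters. *)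

From HB Require Import structures.
From mathcomp Require Import all_boot all_order all_algebra.
From mathcomp Require Import all_classical all_reals all_analysis.
Set Implicit Arguments. Unset Strict Implicit. Unset Printing Implicit Defensive.
Import Order.TTheory GRing.Theory Num.Theory.
Import numFieldNormedType.Exports.
Local Open Scope classical_set_scope.
Local Open Scope ring_scope.

Section SBP.
Variable R : realType.
Variable p : nat.

(* integral over [a,b] (Lebesgue = Riemann for the continuous integrands used) *)
Definition int_ab (a b : R) (f : R -> R) : R :=
  Rintegral (@lebesgue_measure R) `[a, b] f.

Definition lagrange (x : 'I_p.+1 -> R) (j : 'I_p.+1) : {poly R} :=
  \prod_(m < p.+1 | m != j) (('X - (x m)%:P) * ((x j - x m)^-1)%:P).

(* Gauss--Lobatto rule on [x_0, x_p]: strictly increasing nodes, both endpoints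
   included (x_0 and x_p are the interval ends), positive weights, and exact for
   all polynomials of degree <= 2p-1 (i.e. size <= 2p). *)
Definition gauss_lobatto (x w : 'I_p.+1 -> R) : Prop :=
  [/\ (forall i j : 'I_p.+1, (i < j)%N -> x i < x j),
      (forall j, 0 < w j) &
      (forall q : {poly R}, (size q <= 2 * p)%N ->
          \sum_(j < p.+1) w j * q.[x j] = int_ab (x ord0) (x ord_max) (fun y => q.[y]))].

Definition Pmat (w : 'I_p.+1 -> R) : 'M[R]_p.+1 := diag_mx (\row_j w j).

Definition Qx (x : 'I_p.+1 -> R) : 'M[R]_p.+1 :=
  \matrix_(i, j) int_ab (x ord0) (x ord_max)
                   (fun y => (lagrange x i * (lagrange x j)^`()).[y]).

Definition Dx (x w : 'I_p.+1 -> R) : 'M[R]_p.+1 := invmx (Pmat w) *m Qx x.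

Definition Bmat : 'M[R]_p.+1 :=
  diag_mx (\row_i (if i == ord_max then 1 else if i == ord0 then -1 else 0)).

Definition Emat (eps : 'I_p.+1 -> R -> R) (t : R) : 'M[R]_p.+1 :=
  diag_mx (\row_k eps k t).

Definition sqrtEmat (eps : 'I_p.+1 -> R -> R) (t : R) : 'M[R]_p.+1 :=
  diag_mx (\row_k Num.sqrt (eps k t)).

Definition Qxx (x w : 'I_p.+1 -> R) (eps : 'I_p.+1 -> R -> R) (t : R) : 'M[R]_p.+1 :=
  Emat eps t *m Bmat *m Dx x w
  - (sqrtEmat eps t *m Dx x w)^T *m Pmat w *m (sqrtEmat eps t *m Dx x w).

Definition dUdt (U : R -> 'cV[R]_p.+1) (t : R) : 'cV[R]_p.+1 :=
  \col_k derive1 (fun s => U s k 0) t.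

Definition scheme (x w : 'I_p.+1 -> R) (a : R) (eps : 'I_p.+1 -> R -> R)
    (sigma0 sigmap g0 gp : R) (U : R -> 'cV[R]_p.+1) (t : R) : Prop :=
  Pmat w *m dUdt U t + a *: (Qx x *m U t) =
    Qxx x w eps t *m U t
    + (sigma0 * (a * U t ord0 0 - eps ord0 t * (Dx x w *m U t) ord0 0 - g0))
        *: delta_mx ord0 0
    + (sigmap * (- eps ord_max t * (Dx x w *m U t) ord_max 0 - gp))
        *: delta_mx ord_max 0.

Definition energy (w : 'I_p.+1 -> R) (V : 'cV[R]_p.+1) : R :=
  (V^T *m Pmat w *m V) 0 0.

End SBP.

From Pilot Require Import Defs.
From HB Require Import structures.
From mathcomp Require Import all_boot all_order all_algebra.
From mathcomp Require Import all_classical all_reals all_analysis.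
From mathcomp Require Import zify ring lra.
Import Order.TTheory GRing.Theory Num.Theory.
Import numFieldNormedType.Exports.
Local Open Scope classical_set_scope.
Local Open Scope ring_scope.
Set Implicit Arguments. Unset Strict Implicit. Unset Printing Implicit Defensive.

(* Exactness of the Gauss-Lobatto rule on (l_i l_j)', of degree 2p - 1, gives the
   summation-by-parts property Q_x + Q_x^T = B, hence U^T Q_x U = (u_p^2 - u_0^2) / 2. Multiplying
   the scheme by U^T, the penalties with sigma_0 = -1, sigma_p = 1 cancel the boundary fluxes of
   the diffusion term and leave
     d/dt (U^T P U) = -2 (sqrt(E) D_x U)^T P (sqrt(E) D_x U) - a (u_0^2 + u_p^2),
   whose last term is nonpositive; integrating over [0, t] gives the estimate. *)

Section real_calculus.
Variable R : realType.

Lemma within_continuousD (A : set R) (f g : R -> R) :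
  {within A, continuous f} -> {within A, continuous g} ->
  {within A, continuous (fun r => f r + g r)}.
Proof. by move=> cf cg r; exact: (continuousD (cf r) (cg r)). Qed.

Lemma within_continuousM (A : set R) (f g : R -> R) :
  {within A, continuous f} -> {within A, continuous g} ->
  {within A, continuous (fun r => f r * g r)}.
Proof. by move=> cf cg r; exact: (continuousM (cf r) (cg r)). Qed.

Lemma within_continuous_sum (A : set R) n (F : 'I_n -> R -> R) :
  (forall k, {within A, continuous (F k)}) ->
  {within A, continuous (fun r => \sum_(k < n) F k r)}.
Proof. by move=> cF; apply: continuous_big => [|k _]; [exact: add_continuous|exact: cF]. Qed.

Lemma int_ab_derive (F f : R -> R) (a b : R) : a <= b ->
  {within `[a, b], continuous f} ->
  (forall r, a <= r <= b -> is_derive r 1 F (f r)) ->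
  int_ab a b f = F b - F a.
Proof.
rewrite le_eqVlt => /orP[/eqP <- _ _|ab cf dF].
  by rewrite /int_ab set_itv1 Rintegral_set1 subrr.
have contF r : a <= r <= b -> F x @[x --> r] --> F r.
  by move=> /dF [dFr _]; apply/differentiable_continuous/derivable1_diffP.
rewrite /int_ab /Rintegral (continuous_FTC2 (F := F) ab cf) //.
- split.
  + by move=> r; rewrite in_itv /= => /andP[ar rb]; case: (dF r); rewrite ?ltW.
  + by apply/cvg_at_right_filter/contF; rewrite lexx ltW.
  + by apply/cvg_at_left_filter/contF; rewrite lexx ltW.
- move=> r; rewrite in_itv /= => /andP[ar rb]; rewrite derive1E.
  by apply: derive_val; apply: dF; rewrite !ltW.
Qed.

Lemma int_ab_poly_deriv (q : {poly R}) (a b : R) : a <= b ->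
  int_ab a b (fun y => q^`().[y]) = q.[b] - q.[a].
Proof.
move=> ab; apply: int_ab_derive => //.
by apply: continuous_subspaceT => r; exact: continuous_horner.
Qed.

Lemma energy_estimate (E f G h : R -> R) (a t : R) : 0 <= a -> 0 <= t ->
  (forall r, 0 <= r <= t -> is_derive r 1 E (f r)) ->
  {within `[0, t], continuous f} -> {within `[0, t], continuous h} ->
  (forall r, 0 <= r <= t -> f r = - 2 * G r - a * h r) ->
  (forall r, 0 <= h r) ->
  E t + 2 * int_ab 0 t G <= E 0.
Proof.
move=> a0 t0 dE cf ch fE h0.
have int_f := continuous_compact_integrable (@segment_compact R 0 t) cf.
have int_h := continuous_compact_integrable (@segment_compact R 0 t) ch.
(* No regularity of G is needed: on [0, t] it is determined by f and h. *)
have -> : int_ab 0 t G = - 2^-1 * int_ab 0 t f + (- a / 2) * int_ab 0 t h.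
  rewrite /int_ab -!RintegralZl // -RintegralD //; last 2 first.
  - by apply: (eq_integrable _ _ _ _ (integrableZl _ (- 2^-1) int_f)).
  - by apply: (eq_integrable _ _ _ _ (integrableZl _ (- a / 2) int_h)).
  by apply: eq_Rintegral => r; rewrite inE /= in_itv /= => /fE ->; field.
rewrite (int_ab_derive t0 cf dE).
have : 0 <= a * int_ab 0 t h by rewrite mulr_ge0 // Rintegral_ge0.
lra.
Qed.

End real_calculus.

Section gauss_lobatto_sbp.
Variables (R : realType) (p : nat).
Implicit Types (x w : 'I_p.+1 -> R) (u v : 'cV[R]_p.+1).

Lemma size_deriv_leq (q : {poly R}) : (size q^`() <= (size q).-1)%N.
Proof.
have [->|q0] := eqVneq q 0; first by rewrite deriv0 size_poly0.
by have := lt_size_deriv q0; case: (size q).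
Qed.

Lemma size_lagrange x j : (size (Defs.lagrange x j) <= p.+1)%N.
Proof.
apply: leq_trans (size_poly_prod_leq _ _) _.
have -> : #|[pred m : 'I_p.+1 | m != j]| = p by rewrite cardC1 card_ord.
suff : (\sum_(m | m != j) size (('X - (x m)%:P) * ((x j - x m)^-1)%:P)%R <= 2 * p)%N.
  set s := bigop _ _ _; lia.
apply: (@leq_trans (\sum_(m | m != j) 2)%N).
  apply: leq_sum => m _; apply: leq_trans (size_polyMleq _ _) _.
  by rewrite size_XsubC; case: (size _) (size_polyC_leq1 (x j - x m)^-1) => [|[|]].
by rewrite sum_nat_const cardC1 card_ord mulnC.
Qed.

Lemma lagrange_node x : injective x -> forall i j,
  (Defs.lagrange x j).[x i] = (i == j)%:R.
Proof.
move=> x_inj i j; rewrite horner_prod; have [->|nij] := eqVneq i j.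
  apply: big1 => m mj; rewrite hornerM hornerC hornerXsubC mulfV //.
  by rewrite subr_eq0; apply: contra mj => /eqP/x_inj ->.
by rewrite (bigD1 i) //= hornerM hornerXsubC subrr !mul0r.
Qed.

Variables (x w : 'I_p.+1 -> R).
Hypothesis hp : (1 <= p)%N.
Hypothesis hGL : gauss_lobatto x w.

Lemma gauss_lobatto_inj : injective x.
Proof.
case: hGL => x_incr _ _ i j eqx; apply/val_inj/eqP.
by case: ltngtP => // /x_incr; rewrite eqx ltxx.
Qed.

Lemma ord0_neq_max : (ord0 : 'I_p.+1) != ord_max.
Proof. by rewrite -(inj_eq val_inj) /= eq_sym -lt0n. Qed.

Lemma Qx_sbp : Qx x + (Qx x)^T = Bmat R p.
Proof.
have x_inj := gauss_lobatto_inj.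
case: hGL => x_incr _ exact_GL; apply/matrixP => i j; rewrite !mxE.
have size_lagrange_deriv a b :
    (size (Defs.lagrange x a * (Defs.lagrange x b)^`())%R <= 2 * p)%N.
  apply: leq_trans (size_polyMleq _ _) _.
  have := size_lagrange x a; have := size_deriv_leq (Defs.lagrange x b).
  have := size_lagrange x b; lia.
rewrite -!exact_GL ?size_lagrange_deriv // -big_split /=.
under eq_bigr => k _ do
  rewrite -mulrDr -hornerD [X in X + _]mulrC -derivM.
rewrite exact_GL; last first.
  apply: leq_trans (size_deriv_leq _) _.
  have := size_polyMleq (Defs.lagrange x j) (Defs.lagrange x i).
  have := size_lagrange x i; have := size_lagrange x j; lia.
rewrite int_ab_poly_deriv ?ltW ?x_incr // !hornerM !lagrange_node //.
rewrite ![ord_max == _]eq_sym ![ord0 == _]eq_sym.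
have [<-{j}|nij] := eqVneq i j; last first.
  have no_common k : (j == k)%:R * (i == k)%:R = 0 :> R.
    by have [<-|_] := eqVneq i k; rewrite ?mulr0 // eq_sym (negPf nij) mul0r.
  by rewrite mulr0n !no_common subr0.
have [->|_] := eqVneq i ord_max.
  by rewrite eq_sym (negPf ord0_neq_max) mulr0 subr0 mulr1.
by case: (i == ord0); rewrite ?mulr0n ?mulr1n; ring.
Qed.

Lemma Bmat_form u v :
  (u^T *m Bmat R p *m v) 0 0 = u ord_max 0 * v ord_max 0 - u ord0 0 * v ord0 0.
Proof.
rewrite -mulmxA mul_diag_mx !mxE (bigD1 ord_max) //= (bigD1 ord0) ?ord0_neq_max //=.
rewrite big1 => [|k /andP[kmax k0]]; last by rewrite !mxE (negPf kmax) (negPf k0) mul0r mulr0.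
by rewrite !mxE eqxx ifN ?ord0_neq_max //; ring.
Qed.

Lemma Qx_form u : (u^T *m Qx x *m u) 0 0 = (u ord_max 0 ^+ 2 - u ord0 0 ^+ 2) / 2.
Proof.
have form_tr : (u^T *m (Qx x)^T *m u) 0 0 = (u^T *m Qx x *m u) 0 0.
  transitivity ((u^T *m Qx x *m u)^T 0 0); last by rewrite mxE.
  by rewrite !trmx_mul trmxK mulmxA.
have := Bmat_form u u; rewrite -Qx_sbp mulmxDr mulmxDl mxE form_tr -!expr2 => <-.
by field.
Qed.

Lemma Pmat_form u v : (u^T *m (Pmat w *m v)) 0 0 = \sum_(k < p.+1) w k * (u k 0 * v k 0).
Proof. by rewrite mul_diag_mx mxE; apply: eq_bigr => k _; rewrite !mxE mulrCA. Qed.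

Lemma energyE v : energy w v = \sum_(k < p.+1) w k * v k 0 ^+ 2.
Proof. by rewrite /energy -mulmxA Pmat_form; under eq_bigr do rewrite -expr2. Qed.

Lemma Qxx_form eps t u :
  (u^T *m (Qxx x w eps t *m u)) 0 0 =
    u ord_max 0 * (eps ord_max t * (Dx x w *m u) ord_max 0)
    - u ord0 0 * (eps ord0 t * (Dx x w *m u) ord0 0)
    - energy w (sqrtEmat eps t *m Dx x w *m u).
Proof.
rewrite /Qxx; move: (Dx x w) => D.
rewrite mulmxBl mulmxBr [(_ - _ : 'M[R]_1) _ _]mxE [(- _ : 'M[R]_1) _ _]mxE !mulmxA.
congr (_ - _).
  have -> : u^T *m Emat eps t = (Emat eps t *m u)^T by rewrite trmx_mul tr_diag_mx.
  by rewrite -mulmxA Bmat_form !mul_diag_mx !mxE; ring.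
by rewrite /energy !trmx_mul !mulmxA.
Qed.

Lemma scheme_energy_rate a eps U t :
  scheme x w a eps (-1) 1 0 0 U t ->
  \sum_(k < p.+1) w k * (U t k 0 * dUdt U t k 0) =
    - energy w (sqrtEmat eps t *m Dx x w *m U t)
    - a / 2 * (U t ord0 0 ^+ 2 + U t ord_max 0 ^+ 2).
Proof.
rewrite /scheme => /(congr1 (fun M => ((U t)^T *m M) 0 0)).
move: (U t) (dUdt U t) => u du.
have delta_form (k : 'I_p.+1) : (u^T *m delta_mx k (0 : 'I_1)) 0 0 = u k 0 by rewrite -colE !mxE.
rewrite !mulmxDr -!scalemxAr ![(_ + _ : 'M[R]_1) _ _]mxE ![(_ *: _ : 'M[R]_1) _ _]mxE.
rewrite Pmat_form [u^T *m (Qx x *m u)]mulmxA Qx_form Qxx_form !delta_form.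
move=> /(congr1 (fun z => z - a * ((u ord_max 0 ^+ 2 - u ord0 0 ^+ 2) / 2))).
by rewrite addrK => ->; field.
Qed.

Lemma is_derive_energy (U : R -> 'cV[R]_p.+1) r :
  (forall k, derivable (fun s => U s k 0) r 1) ->
  is_derive r 1 (fun s => energy w (U s))
    (2 * \sum_(k < p.+1) w k * (U r k 0 * dUdt U r k 0)).
Proof.
move=> dU; have dUk k : is_derive r 1 (fun s => U s k 0) (dUdt U r k 0).
  by rewrite mxE derive1E; exact: derivableP.
have := @is_derive_sum _ _ _ _ (fun k s => w k * (U s k 0 * U s k 0)) r 1 _
  (fun k => is_deriveZ (w k) (is_deriveM (dUk k) (dUk k))).
have -> : \sum_(k < p.+1) (fun s => w k * (U s k 0 * U s k 0)) = fun s => energy w (U s).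
  by apply/funext => s; rewrite fct_sumE energyE; apply: eq_bigr => k _; rewrite expr2.
move/is_derive_eq; apply; rewrite mulr_sumr; apply: eq_bigr => k _.
rewrite /GRing.scale /=; ring.
Qed.

End gauss_lobatto_sbp.

Theorem proposition2 (R : realType) (p : nat) (hp : (1 <= p)%N)
  (x w : 'I_p.+1 -> R) (hGL : gauss_lobatto x w)
  (a : R) (ha : 0 <= a)
  (eps : 'I_p.+1 -> R -> R)
  (heps_nn : forall k t, 0 <= t -> 0 <= eps k t)
  (heps_cont : forall k, {within `[0, +oo[, continuous (eps k)})
  (sigma0 sigmap g0 gp : R)
  (U : R -> 'cV[R]_p.+1)
  (hU_der : forall k t, 0 <= t -> derivable (fun s => U s k 0) t 1)
  (hU_C1 : forall k, {within `[0, +oo[, continuous (fun t => derive1 (fun s => U s k 0) t)})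
  (hscheme : forall t, 0 <= t -> scheme x w a eps sigma0 sigmap g0 gp U t)
  (hs0 : sigma0 = -1) (hsp : sigmap = 1) (hg0 : g0 = 0) (hgp : gp = 0) :
  forall t, 0 <= t ->
    energy w (U t)
    + 2 * int_ab 0 t (fun s => energy w (sqrtEmat eps s *m Dx x w *m U s))
    <= energy w (U 0).
Proof.
subst sigma0 sigmap g0 gp => t t0.
have sub_0t : `[0, t] `<=` `[0, +oo[ by move=> s; rewrite /= !in_itv /= => /andP[-> _].
have cU k : {within `[0, t], continuous (fun s => U s k 0)}.
  apply: continuous_in_subspaceT => s; rewrite inE /= in_itv /= => /andP[s0 _].
  exact/differentiable_continuous/derivable1_diffP/hU_der.
have cdU k : {within `[0, t], continuous (fun s => dUdt U s k 0)}.
  have -> : (fun s => dUdt U s k 0) = fun s => derive1 (fun r => U r k 0) s.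
    by apply/funext => s; rewrite mxE.
  exact: continuous_subspaceW sub_0t (hU_C1 k).
apply: (energy_estimate ha t0 (E := fun r => energy w (U r))
  (G := fun r => energy w (sqrtEmat eps r *m Dx x w *m U r))
  (f := fun r => 2 * \sum_(k < p.+1) w k * (U r k 0 * dUdt U r k 0))
  (h := fun r => U r ord0 0 ^+ 2 + U r ord_max 0 ^+ 2)).
- by move=> r /andP[r0 _]; apply: is_derive_energy => k; exact: hU_der.
- apply: within_continuousM => [r|]; first exact: cst_continuous.
  apply: within_continuous_sum => k; apply: within_continuousM => [r|]; first exact: cst_continuous.
  exact: within_continuousM.
- by apply: within_continuousD; rewrite /GRing.exp /=; apply: within_continuousM.
- by move=> r /andP[r0 _]; rewrite (scheme_energy_rate hp hGL (hscheme r r0)); field.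
- by move=> r; apply: addr_ge0; exact: sqr_ge0.
Qed.
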